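(* Let $R$ be a local ring with maximal ideal $\mathcal{M}$ such that $\mathcal{M}$ is finitely generated both as a left ideal and as a right ideal, and $\mathcal{M}^k=(0)$ for some $k\in\mathbb{N}$. If every left $R$-module generated by two elements is a direct sum of cyclic modules, then either $R$ is a left Artinian principal left ideal ring or $R$ is a right Artinian principal right ideal ring.
   Context: All rings have identity and modules are unital. A ring $R$ is local if it has a unique maximal left ideal $\mathcal{M}$. *)

From HB Require Import structures.
From mathcomp Require Import all_boot all_order all_algebra.
Set Implicit Arguments. Unset Strict Implicit. Unset Printing Implicit Defensive.
Import GRing.Theory.
Local Open Scope ring_scope.

Section Ideals.
Variable R : nzRingType.

Definition left_ideal (I : R -> Prop) : Prop :=
  [/\ I 0, (forall x y, I x -> I y -> I (x + y)) & (forall r x, I x -> I (r * x))].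

Definition right_ideal (I : R -> Prop) : Prop :=
  [/\ I 0, (forall x y, I x -> I y -> I (x + y)) & (forall r x, I x -> I (x * r))].

Definition maximal_left_ideal (M : R -> Prop) : Prop :=
  [/\ left_ideal M, ~ M 1 &
      forall J, left_ideal J -> ~ J 1 -> (forall x, M x -> J x) -> forall x, J x -> M x].

Definition local_with_max (M : R -> Prop) : Prop :=
  maximal_left_ideal M /\
  forall N, maximal_left_ideal N -> forall x, N x <-> M x.

Definition fg_left_ideal (I : R -> Prop) : Prop :=
  exists (n : nat) (s : 'I_n -> R),
    forall x, I x <-> exists r : 'I_n -> R, x = \sum_(i < n) r i * s i.

Definition fg_right_ideal (I : R -> Prop) : Prop :=
  exists (n : nat) (s : 'I_n -> R),
    forall x, I x <-> exists r : 'I_n -> R, x = \sum_(i < n) s i * r i.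

(* I^k = (0): I^k is generated by the products of k elements of I *)
Definition ideal_pow_zero (I : R -> Prop) (k : nat) : Prop :=
  forall m : 'I_k -> R, (forall i, I (m i)) -> \prod_(i < k) m i = 0.

Definition left_artinian : Prop :=
  forall I : nat -> R -> Prop,
    (forall n, left_ideal (I n)) ->
    (forall n x, I n.+1 x -> I n x) ->
    exists N, forall n, (N <= n)%N -> forall x, I n x <-> I N x.

Definition right_artinian : Prop :=
  forall I : nat -> R -> Prop,
    (forall n, right_ideal (I n)) ->
    (forall n x, I n.+1 x -> I n x) ->
    exists N, forall n, (N <= n)%N -> forall x, I n x <-> I N x.

Definition principal_left_ideal_ring : Prop :=
  forall I, left_ideal I -> exists a : R, forall x, I x <-> exists r, x = r * a.

Definition principal_right_ideal_ring : Prop :=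
  forall I, right_ideal I -> exists a : R, forall x, I x <-> exists r, x = a * r.

End Ideals.

Section Modules.
Variables (R : nzRingType) (V : lmodType R).

Definition generated_by_two : Prop :=
  exists a b : V, forall v : V, exists r s : R, v = r *: a + s *: b.

Definition direct_sum_of_cyclics : Prop :=
  exists (n : nat) (x : 'I_n -> V),
    (forall v : V, exists r : 'I_n -> R, v = \sum_(i < n) r i *: x i) /\
    (forall r : 'I_n -> R, \sum_(i < n) r i *: x i = 0 -> forall i, r i *: x i = 0).

End Modules.

(* Elements outside M are units, since M is the unique maximal left ideal and
   consists of nilpotents; in particular M is two-sided.  For x, y in M the
   module R^2/R(x,y) is generated by two elements; decomposing it as a direct
   sum of cyclic modules and comparing coordinates shows xR <= yR or yR <= xR.
   Hence the finitely generated right ideal M is principal, M = tR, every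
   element is t^i u with u a unit, and the right ideals of R are the finitely
   many t^i R.  So R is always right Artinian and a principal right ideal ring. *)

From HB Require Import structures.
From mathcomp Require Import all_boot all_order all_algebra ring_quotient.
From mathcomp Require Import boolp.
Set Implicit Arguments. Unset Strict Implicit. Unset Printing Implicit Defensive.
Import GRing.Theory.
Local Open Scope ring_scope.

Definition invertible (R : nzRingType) (a : R) := exists b, b * a = 1 /\ a * b = 1.

Definition right_comparable (R : nzRingType) (x y : R) :=
  (exists c, x = y * c) \/ (exists c, y = x * c).

Section RingFacts.
Variable R : nzRingType.
Implicit Types a b m : R.

Lemma expr_mul_eq1 a b n : a * b = 1 -> a ^+ n * b ^+ n = 1.
Proof.
move=> ab1; elim: n => [|n IH]; first by rewrite !expr0 mulr1.
by rewrite exprSr exprS mulrA -(mulrA _ a) ab1 mulr1.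
Qed.

Lemma nilpotent_mulr_neq1 a b n : a ^+ n = 0 -> a * b <> 1.
Proof.
move=> an0 /(expr_mul_eq1 n); rewrite an0 mul0r => /eqP.
by rewrite eq_sym oner_eq0.
Qed.

Lemma sum_expr_mul1B m n : (\sum_(i < n) m ^+ i) * (1 - m) = 1 - m ^+ n.
Proof.
elim: n => [|n IH]; first by rewrite big_ord0 mul0r expr0 subrr.
by rewrite big_ord_recr /= mulrDl IH mulrBr mulr1 exprSr addrA subrK.
Qed.

Lemma ideal_pow_zero_nilpotent (I : R -> Prop) k :
  ideal_pow_zero I k -> forall m, I m -> m ^+ k = 0.
Proof.
by move=> Ik m Im; have := Ik (fun _ => m) (fun _ => Im); rewrite prodr_const card_ord.
Qed.

Lemma right_comparable0 y : right_comparable (0 : R) y.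
Proof. by left; exists 0; rewrite mulr0. Qed.

Lemma right_comparable_generator (P : R -> Prop) n (s : 'I_n -> R) :
  P 0 -> (forall x y, P x -> P y -> right_comparable x y) ->
  (forall i, P (s i)) -> exists t, P t /\ forall i, exists c, s i = t * c.
Proof.
move=> P0 Pcomp; elim: n s => [|n IH] s Ps; first by exists 0; split => // [[]].
have [t [Pt t_div]] := IH (fun i => s (lift ord0 i)) (fun i => Ps _).
case: (Pcomp (s ord0) t (Ps ord0) Pt) => [[c s0t]|[c ts0]].
  exists t; split => // i; case: (unliftP ord0 i) => [j ->|->]; first exact: t_div.
  by exists c.
exists (s ord0); split => // i; case: (unliftP ord0 i) => [j ->|->].
  by case: (t_div j) => c' ->; rewrite ts0; exists (c * c'); rewrite mulrA.
by exists 1; rewrite mulr1.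
Qed.

End RingFacts.

Section ModuleSums.
Variables (R : nzRingType) (V : lmodType R) (n : nat).

Lemma sum_scale_linear2 (z : 'I_n -> V) (p q : 'I_n -> R) (a b : R) :
  \sum_i (a * p i + b * q i) *: z i =
  a *: (\sum_i p i *: z i) + b *: (\sum_i q i *: z i).
Proof.
rewrite !scaler_sumr -big_split /=; apply: eq_bigr => i _.
by rewrite scalerDl !scalerA.
Qed.

Lemma sum_scale_coords2 (r a b : 'I_n -> R) (u v : V) :
  \sum_i r i *: (a i *: u + b i *: v) =
  (\sum_i r i * a i) *: u + (\sum_i r i * b i) *: v.
Proof.
rewrite !scaler_suml -big_split /=; apply: eq_bigr => i _.
by rewrite scalerDr !scalerA.
Qed.

Lemma sum_delta_scale (z : 'I_n -> V) j : \sum_i (i == j)%:R *: z i = z j.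
Proof.
rewrite (bigD1 j) //= eqxx scale1r big1 ?addr0 // => i /negbTE ->.
by rewrite scale0r.
Qed.

End ModuleSums.

Section QuotientModule.
Local Open Scope quotient_scope.
Variables (R : nzRingType) (V : lmodType R) (S : zmodClosed V).
Hypothesis scalerS : GRing.scaler_closed S.
Local Notation Q := (@Quotient.quot V S).

Definition quot_scale (a : R) := lift_op1 Q ( *:%R a).

Lemma pi_scale a : {morph \pi_Q : v / a *: v >-> quot_scale a v}.
Proof.
move=> v; unlock quot_scale; apply/eqP; rewrite piE Quotient.equivE.
by rewrite -scalerBr scalerS // Quotient.idealrBE reprK.
Qed.
Canonical pi_scale_morph a := PiMorph1 (pi_scale a).

Lemma quot_scaleA a b v : quot_scale a (quot_scale b v) = quot_scale (a * b) v.
Proof. by rewrite -[v]reprK !piE scalerA. Qed.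

Lemma quot_scale1 : left_id 1 quot_scale.
Proof. by move=> v; rewrite -[v]reprK !piE scale1r. Qed.

Lemma quot_scaleDr : right_distributive quot_scale +%R.
Proof. by move=> a u v; rewrite -[u]reprK -[v]reprK !piE scalerDr. Qed.

Lemma quot_scaleDl v : {morph quot_scale^~ v : a b / a + b}.
Proof. by move=> a b; rewrite -[v]reprK !piE scalerDl. Qed.

Lemma pi_quot_scale_add a b u v :
  quot_scale a (\pi_Q u) + quot_scale b (\pi_Q v) = \pi_Q (a *: u + b *: v).
Proof. by rewrite !piE. Qed.

Lemma pi_eq0 v : (\pi_Q v == 0) = (v \in S).
Proof.
have -> : 0 = \pi_Q 0 by rewrite piE.
by rewrite -Quotient.idealrBE subr0.
Qed.

End QuotientModule.

Section CyclicQuotient.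
Local Open Scope quotient_scope.
Variables (R : nzRingType) (V : lmodType R) (w : V).

Definition cyclic_submod : pred V := fun v => `[< exists c, v = c *: w >].

Lemma cyclic_submodP v : reflect (exists c, v = c *: w) (v \in cyclic_submod).
Proof. exact: asboolP. Qed.

Lemma cyclic_submod_zmod_closed : zmod_closed cyclic_submod.
Proof.
split; first by apply/cyclic_submodP; exists 0; rewrite scale0r.
move=> _ _ /cyclic_submodP[a ->] /cyclic_submodP[b ->].
by apply/cyclic_submodP; exists (a - b); rewrite scalerBl.
Qed.

HB.instance Definition _ :=
  GRing.isZmodClosed.Build V cyclic_submod cyclic_submod_zmod_closed.

Lemma cyclic_submod_scaler_closed : GRing.scaler_closed cyclic_submod.
Proof.
move=> a _ /cyclic_submodP[b ->].
by apply/cyclic_submodP; exists (a * b); rewrite scalerA.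
Qed.

Definition cyclic_quotient : Type :=
  @Quotient.quot V (GRing.ZmodClosed.clone V cyclic_submod _).
Local Notation Q := cyclic_quotient.

(* [zmodClosed] carries no scaling, so the module structure of a quotient is
   declared submodule by submodule. *)
HB.instance Definition _ := GRing.Zmodule.on Q.
HB.instance Definition _ := GRing.Zmodule_isLmodule.Build R Q
  (quot_scaleA cyclic_submod_scaler_closed) (quot_scale1 cyclic_submod_scaler_closed)
  (quot_scaleDr cyclic_submod_scaler_closed) (quot_scaleDl cyclic_submod_scaler_closed).

Lemma pi_comb2 a b (u v : V) :
  a *: (\pi_Q u : Q) + b *: (\pi_Q v : Q) = \pi_Q (a *: u + b *: v).
Proof. exact: pi_quot_scale_add cyclic_submod_scaler_closed a b u v. Qed.

End CyclicQuotient.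

Section TwoGeneratorModule.
Local Open Scope quotient_scope.
Variables (R : nzRingType) (x y : R).
Local Notation R2 := (R^o * R^o)%type.
Local Notation P := (cyclic_quotient ((x, y) : R2)).

Lemma pair_coords (a b : R) : a *: ((1, 0) : R2) + b *: (0, 1) = (a, b).
Proof. by congr (_, _); rewrite /= scaler0 (addr0, add0r); apply: mulr1. Qed.

Definition two_gen1 : P := \pi_P (1, 0).
Definition two_gen2 : P := \pi_P (0, 1).

Lemma two_gen_comb a b : a *: two_gen1 + b *: two_gen2 = \pi_P (a, b).
Proof. by rewrite pi_comb2 pair_coords. Qed.

Lemma two_gen_span v : exists a b, v = a *: two_gen1 + b *: two_gen2.
Proof. by case: (repr v) (reprK v) => a b <-; exists a, b; rewrite two_gen_comb. Qed.

Lemma two_gen_rel a b :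
  a *: two_gen1 + b *: two_gen2 = 0 -> exists c, a = c * x /\ b = c * y.
Proof.
by rewrite two_gen_comb => /eqP; rewrite pi_eq0 => /cyclic_submodP[c [-> ->]]; exists c.
Qed.

Lemma two_gen_rel_xy : x *: two_gen1 + y *: two_gen2 = 0.
Proof.
rewrite two_gen_comb; apply/eqP; rewrite pi_eq0.
by apply/cyclic_submodP; exists 1; rewrite scale1r.
Qed.
End TwoGeneratorModule.

Section LocalRing.
Variables (R : nzRingType) (M : R -> Prop) (k : nat).
Hypothesis Mmax : maximal_left_ideal M.
Hypothesis Mnil : forall m, M m -> m ^+ k = 0.

Lemma M_0 : M 0. Proof. by case: Mmax => -[]. Qed.

Lemma M_add a b : M a -> M b -> M (a + b).
Proof. by case: Mmax => -[_ MD _] _ _; apply: MD. Qed.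

Lemma M_mull r a : M a -> M (r * a).
Proof. by case: Mmax => -[_ _ ML] _ _; apply: ML. Qed.

Lemma notM_1 : ~ M 1. Proof. by case: Mmax. Qed.

Lemma M_opp a : M a -> M (- a).
Proof. by rewrite -mulN1r; apply: M_mull. Qed.

Lemma M_sub a b : M a -> M b -> M (a - b).
Proof. by move=> Ma /M_opp; apply: M_add. Qed.

Lemma M_sum n (f : 'I_n -> R) : (forall i, M (f i)) -> M (\sum_i f i).
Proof.
by move=> Mf; apply: (big_ind M) => [||i _]; [exact: M_0 | exact: M_add | exact: Mf].
Qed.

Lemma notM_linv a : ~ M a -> exists b, b * a = 1.
Proof.
move=> Ma; pose J z := exists r m, M m /\ z = r * a + m.
have J_ideal : left_ideal J.
  split; first by exists 0, 0; rewrite mul0r addr0; split=> //; exact: M_0.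
    move=> _ _ [r [m [Mm ->]]] [r' [m' [Mm' ->]]]; exists (r + r'), (m + m').
    by rewrite mulrDl addrACA; split=> //; apply: M_add.
  move=> c _ [r [m [Mm ->]]]; exists (c * r), (c * m).
  by rewrite mulrDr mulrA; split=> //; apply: M_mull.
have [r [m [Mm ram]]] : J 1.
  apply: contrapT => J1; apply: Ma; case: Mmax => _ _ /(_ J J_ideal J1); apply.
    by move=> m Mm; exists 0, m; split=> //; rewrite mul0r add0r.
  by exists 1, 0; split; [exact: M_0 | rewrite mul1r addr0].
have ra : r * a = 1 - m by rewrite ram addrK.
exists ((\sum_(i < k) m ^+ i) * r).
by rewrite -mulrA ra sum_expr_mul1B Mnil ?subr0.
Qed.

Lemma notM_invertible a : ~ M a -> invertible a.
Proof.
move=> Ma; have [b ba] := notM_linv Ma.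
have Mb : ~ M b by move/Mnil => bk0; exact: nilpotent_mulr_neq1 bk0 ba.
have [c cb] := notM_linv Mb.
have ca : c = a by rewrite -[c]mulr1 -ba mulrA cb mul1r.
by exists b; split=> //; rewrite -ca.
Qed.

Lemma M_mulr a r : M a -> M (a * r).
Proof.
move=> Ma; apply: contrapT => /notM_invertible[w [_ arw]].
by apply: (nilpotent_mulr_neq1 (b := r * w) (Mnil Ma)); rewrite mulrA.
Qed.

Lemma notM_add a m : ~ M a -> M m -> ~ M (a + m).
Proof. by move=> Ma Mm Mam; apply: Ma; rewrite -(addrK m a); apply: M_sub. Qed.

Lemma notM_scale_eq0 (V : lmodType R) a (v : V) : ~ M a -> a *: v = 0 -> v = 0.
Proof.
by move=> /notM_invertible[b [ba _]] av0; rewrite -[v]scale1r -ba -scalerA av0 scaler0.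
Qed.

Lemma notM_mul_eq0 a v : ~ M a -> a * v = 0 -> v = 0.
Proof. exact: (@notM_scale_eq0 R^o). Qed.

Lemma notM_sum n (f : 'I_n -> R) : ~ M (\sum_i f i) -> exists i, ~ M (f i).
Proof. by move=> Mf; apply/existsNP => allM; apply: Mf; exact: M_sum. Qed.

Section TwoGeneratorPresentation.
Variables (V : lmodType R) (e1 e2 : V) (x y : R).
Hypotheses (Mx : M x) (My : M y).
Hypothesis rel_e :
  forall a b, a *: e1 + b *: e2 = 0 -> exists c, a = c * x /\ b = c * y.
Hypothesis rel_xy : x *: e1 + y *: e2 = 0.

Section Coordinates.
Variables (n : nat) (z : 'I_n -> V).
Hypothesis indep_z : forall r, \sum_i r i *: z i = 0 -> forall i, r i *: z i = 0.
Variables (r s a b : 'I_n -> R).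
Hypotheses (e1_z : e1 = \sum_i r i *: z i) (e2_z : e2 = \sum_i s i *: z i).
Hypothesis z_e : forall i, z i = a i *: e1 + b i *: e2.

Let t i := x * r i + y * s i.

Let M_t i : M (t i).
Proof. by apply: M_add; apply: M_mulr. Qed.

Lemma t_scale_z_eq0 i : t i *: z i = 0.
Proof. by apply: indep_z; rewrite sum_scale_linear2 -e1_z -e2_z. Qed.

Lemma exists_annihilator_coords :
  exists d : 'I_n -> R, forall i, t i * a i = d i * x /\ t i * b i = d i * y.
Proof.
suff /fin_all_exists : forall i, exists di, t i * a i = di * x /\ t i * b i = di * y.
  by [].
by move=> i; apply: rel_e; rewrite -!scalerA -scalerDr -z_e t_scale_z_eq0.
Qed.

Lemma z_eq0_of_M_coords j : M (a j) -> M (b j) -> z j = 0.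
Proof.
move=> Maj Mbj.
have coef : (a j * r j + b j * s j - 1) *: z j = 0.
  have sum0 : \sum_i (a j * r i + b j * s i - (i == j)%:R) *: z i = 0.
    under eq_bigr do rewrite scalerBl.
    by rewrite sumrB sum_scale_linear2 -e1_z -e2_z sum_delta_scale -z_e subrr.
  by have := indep_z sum0 j; rewrite eqxx.
apply: notM_scale_eq0 coef; rewrite addrC; apply: notM_add.
  by move/M_opp; rewrite opprK; exact: notM_1.
by apply: M_add; apply: M_mulr.
Qed.

Section Annihilator.
Variable d : 'I_n -> R.
Hypothesis d_ann : forall i, t i * a i = d i * x /\ t i * b i = d i * y.

(* The e1-coordinates of e1 = A e1 + C e2 and e2 = B e1 + E e2 give
   A = 1 + c1 x and B = c2 x, whence (\sum_i d i) x = u x with u = 1 mod M. *)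
Lemma x_eq0_or_notM_coef : x = 0 \/ exists j, ~ M (d j).
Proof.
pose A := \sum_i r i * a i; pose B := \sum_i s i * a i.
have [c1 [c1x _]] : exists c1, A - 1 = c1 * x /\ \sum_i r i * b i = c1 * y.
  apply: rel_e; rewrite scalerBl scale1r addrAC.
  rewrite -sum_scale_coords2 -(eq_bigr _ (fun i _ => congr1 _ (z_e i))).
  by rewrite -e1_z subrr.
have [c2 [c2x _]] : exists c2, B = c2 * x /\ \sum_i s i * b i - 1 = c2 * y.
  apply: rel_e; rewrite scalerBl scale1r addrA.
  rewrite -sum_scale_coords2 -(eq_bigr _ (fun i _ => congr1 _ (z_e i))).
  by rewrite -e2_z subrr.
pose u := 1 + x * c1 + y * c2.
have key : (\sum_i d i - u) * x = 0.
  have sum_ta : \sum_i t i * a i = x * A + y * B.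
    rewrite /A /B !mulr_sumr -big_split; apply: eq_bigr => i _.
    by rewrite /t mulrDl !mulrA.
  have sum_dx : \sum_i t i * a i = (\sum_i d i) * x.
    by rewrite mulr_suml; apply: eq_bigr => i _; case: (d_ann i).
  have A_eq : A = c1 * x + 1 by rewrite -c1x subrK.
  rewrite mulrBl -sum_dx sum_ta A_eq c2x /u mulrDr mulr1 !mulrDl mul1r !mulrA.
  by rewrite [x * c1 * x + x]addrC subrr.
have [Mdu | nMdu] := pselect (M (\sum_i d i - u)); last first.
  by left; exact: notM_mul_eq0 nMdu key.
right; apply: notM_sum.
have nMu : ~ M u.
  by rewrite /u -addrA; apply: notM_add notM_1 _; apply: M_add; apply: M_mulr.
by have := notM_add nMu Mdu; rewrite addrC subrK.
Qed.

Lemma right_comparable_of_notM_coef j : ~ M (d j) -> right_comparable x y.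
Proof.
move=> /notM_invertible[g [gd _]].
have hx : x = g * (t j * a j) by rewrite (d_ann j).1 mulrA gd mul1r.
have hy : y = g * (t j * b j) by rewrite (d_ann j).2 mulrA gd mul1r.
have [Maj | /notM_invertible[h [_ ah]]] := pselect (M (a j)); last first.
  by right; exists (h * b j); rewrite hy hx -!mulrA (mulrA (a j)) ah mul1r.
have [Mbj | /notM_invertible[h [_ bh]]] := pselect (M (b j)); last first.
  by left; exists (h * a j); rewrite hy {1}hx -!mulrA (mulrA (b j)) bh mul1r.
have [c [ac _]] := rel_e (etrans (esym (z_e j)) (z_eq0_of_M_coords Maj Mbj)).
have x0 : (1 - g * t j * c) * x = 0 by rewrite mulrBl mul1r -!mulrA -ac -hx subrr.
rewrite (notM_mul_eq0 _ x0); first exact: right_comparable0.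
by apply: notM_add notM_1 _; apply/M_opp/M_mulr/M_mull; exact: M_t.
Qed.

End Annihilator.

Lemma coords_right_comparable : right_comparable x y.
Proof.
have [d d_ann] := exists_annihilator_coords.
case: (x_eq0_or_notM_coef d_ann) => [-> | [j]]; first exact: right_comparable0.
exact: right_comparable_of_notM_coef.
Qed.

End Coordinates.

Lemma decomposable_right_comparable :
  (forall v, exists a b, v = a *: e1 + b *: e2) -> direct_sum_of_cyclics V ->
  right_comparable x y.
Proof.
move=> span_e [n [z [span_z indep_z]]].
have [r e1_z] := span_z e1; have [s e2_z] := span_z e2.
have /fin_all_exists[ab z_e] : forall i, exists p : R * R, z i = p.1 *: e1 + p.2 *: e2.
  by move=> i; have [a [b ->]] := span_e (z i); exists (a, b).
exact: (coords_right_comparable indep_z e1_z e2_z z_e).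
Qed.

End TwoGeneratorPresentation.

Lemma two_generated_right_comparable :
  (forall V : lmodType R, generated_by_two V -> direct_sum_of_cyclics V) ->
  forall x y, M x -> M y -> right_comparable x y.
Proof.
move=> decomp x y Mx My.
apply: (decomposable_right_comparable Mx My (two_gen_rel (x:=x) (y:=y))).
- exact: two_gen_rel_xy.
- exact: two_gen_span.
- by apply: decomp; exists (two_gen1 x y), (two_gen2 x y); exact: two_gen_span.
Qed.

Lemma right_ideal_principal :
  (forall x y, M x -> M y -> right_comparable x y) -> fg_right_ideal M ->
  exists t, forall v, M v <-> exists c, v = t * c.
Proof.
move=> Mcomp [n [s Ms]].
have Ms_i i : M (s i).
  apply/Ms; exists (fun j => (j == i)%:R).
  rewrite (bigD1 i) //= eqxx mulr1 big1 ?addr0 // => j /negbTE ->.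
  by rewrite mulr0.
have [t [Mt /fin_all_exists[c s_tc]]] := right_comparable_generator M_0 Mcomp Ms_i.
exists t => v; split; last by case=> c' ->; apply: M_mulr.
case/Ms => r ->; exists (\sum_i c i * r i); rewrite mulr_sumr.
by apply: eq_bigr => i _; rewrite s_tc mulrA.
Qed.

End LocalRing.

Lemma nondecreasing_bounded_stable (f : nat -> nat) B :
  (forall n, (f n <= f n.+1)%N) -> (forall n, (f n <= B)%N) ->
  exists N, forall n, (N <= n)%N -> f n = f N.
Proof.
move=> f_incr f_le.
have f_homo : {homo f : m n / (m <= n)%N} := homo_leq leqnn leq_trans f_incr.
have attained : exists m, `[< exists n, f n = m >].
  by exists (f 0); apply/asboolP; exists 0.
have bounded m : `[< exists n, f n = m >] -> (m <= B)%N by move/asboolP=> [n <-].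
case: (ex_maxnP attained bounded) => _ /asboolP[N <-] f_max.
exists N => n Nn; apply/eqP; rewrite eqn_leq (f_homo _ _ Nn) andbT.
by apply: f_max; apply/asboolP; exists n.
Qed.

Section RightChainRing.
Variables (R : nzRingType) (t : R) (k : nat).
Hypothesis invertible_off_tR : forall a, ~ (exists c, a = t * c) -> invertible a.
Hypothesis tk0 : t ^+ k = 0.

Lemma expr_ge_eq0 i : (k <= i)%N -> t ^+ i = 0.
Proof. by move=> ki; rewrite -(subnK ki) exprD tk0 mulr0. Qed.

Lemma exists_pow_unit_factor a : exists i u, invertible u /\ a = t ^+ i * u.
Proof.
suff pow_mul d : forall i b, (k <= i + d)%N ->
    exists i' u, invertible u /\ t ^+ i * b = t ^+ i' * u.
  have [i [u [u_inv]]] := pow_mul k 0 a (leq_addl _ _).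
  by rewrite expr0 mul1r => ->; exists i, u.
elim: d => [|d IH] i b ki.
  exists i, 1; split; first by exists 1; rewrite mulr1.
  by rewrite expr_ge_eq0 ?mul0r // -(addn0 i).
have [[c ->] | /invertible_off_tR b_inv] := pselect (exists c, b = t * c).
  by rewrite mulrA -exprSr; apply: IH; rewrite addSnnS.
by exists i, b.
Qed.

(* The disjunct [k <= i] makes the minimum below exist for every I; it is
   harmless for right ideals, which contain t ^+ k = 0. *)
Definition pow_in (I : R -> Prop) : pred nat :=
  fun i => (k <= i)%N || `[< I (t ^+ i) >].

Lemma pow_in_exists I : exists i, pow_in I i.
Proof. by exists k; rewrite /pow_in leqnn. Qed.

Definition ideal_exponent I := ex_minn (pow_in_exists I).

Lemma right_idealE I :
  right_ideal I -> forall v, I v <-> exists c, v = t ^+ ideal_exponent I * c.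
Proof.
case=> I0 _ IM v; rewrite /ideal_exponent; case: ex_minnP => m reach_m m_min.
have It : I (t ^+ m) by case/orP: reach_m => [/expr_ge_eq0 -> // | /asboolP].
split; last by case=> c ->; apply: IM.
move=> Iv; have [i [u [[w [_ uw]] v_eq]]] := exists_pow_unit_factor v.
have Iti : I (t ^+ i) by have := IM w _ Iv; rewrite v_eq -mulrA uw mulr1.
have mi : (m <= i)%N by apply: m_min; apply/orP; right; apply/asboolP.
by exists (t ^+ (i - m) * u); rewrite v_eq mulrA -exprD subnKC.
Qed.

Lemma ideal_exponent_le I : (ideal_exponent I <= k)%N.
Proof.
by rewrite /ideal_exponent; case: ex_minnP => m _; apply; rewrite /pow_in leqnn.
Qed.

Lemma ideal_exponent_anti (I J : R -> Prop) :
  (forall v, I v -> J v) -> (ideal_exponent J <= ideal_exponent I)%N.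
Proof.
move=> IJ; rewrite {2}/ideal_exponent; case: ex_minnP => m reach_m _.
rewrite /ideal_exponent; case: ex_minnP => m' _; apply.
rewrite /pow_in; case/orP: reach_m => [-> // | /asboolP/IJ Jt].
by apply/orP; right; apply/asboolP.
Qed.

Lemma right_chain_artinian_principal :
  right_artinian R /\ principal_right_ideal_ring R.
Proof.
split=> [I I_ideal I_decr | I I_ideal]; last first.
  by exists (t ^+ ideal_exponent I); exact: right_idealE.
have [N N_stable] := nondecreasing_bounded_stable
  (fun n => ideal_exponent_anti (I_decr n)) (fun n => ideal_exponent_le (I n)).
exists N => n Nn v.
by rewrite (right_idealE (I_ideal n)) (right_idealE (I_ideal N)) N_stable.
Qed.

End RightChainRing.

Unset Implicit Arguments.

Theorem theorem2p6 (R : nzRingType) (M : R -> Prop) (k : nat) :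
  local_with_max M ->
  fg_left_ideal M -> fg_right_ideal M ->
  ideal_pow_zero M k ->
  (forall V : lmodType R, generated_by_two V -> direct_sum_of_cyclics V) ->
  (left_artinian R /\ principal_left_ideal_ring R) \/
  (right_artinian R /\ principal_right_ideal_ring R).
Proof.
move=> [Mmax _] _ Mfg /ideal_pow_zero_nilpotent Mnil decomp.
have Mcomp := two_generated_right_comparable Mmax Mnil decomp.
have [t tR] := right_ideal_principal Mmax Mnil Mcomp Mfg.
right; apply: (right_chain_artinian_principal (t := t) (k := k)).
- by move=> a /tR; exact: notM_invertible Mmax Mnil a.
- by apply/Mnil/tR; exists 1; rewrite mulr1.
Qed.
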